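(* Let $1\le k\le n$ and $\rho=\sum_{i=0}^k\lambda_i|D_n^i\rangle\langle D_n^i|$ with $\lambda_i\ge0$, $\sum_{i=0}^k\lambda_i=1$; set $\lambda_i=0$ for $k<i\le n$. Then $L(\rho)\le k$ if and only if the only solution $(a_0,\dots,a_n)$ with all $a_i\ge0$ of the linear system $$\sum_{i=0}^n a_{i}\frac{\binom{k}{s}\binom{n-k}{i-s}}{\binom{n}{i}}=\sum_{i=0}^k\lambda_i\frac{\binom{k}{s}\binom{n-k}{i-s}}{\binom{n}{i}},\qquad 0\le s\le k,$$ is $(a_0,\dots,a_n)=(\lambda_0,\dots,\lambda_k,0,\dots,0)$.
   Context: Convention: $\binom{m}{i}=0$ if $i<0$ or $i>m$. Dicke states: $|D_n^i\rangle=\binom{n}{i}^{-1/2}\sum_{s\in\{0,1\}^n,\ \sum_js_j=i}|s_1\rangle\otimes\cdots\otimes|s_n\rangle$. For $S\subseteq[n]$, $\rho_S$ is the partial trace of $\rho$ over qubits outside $S$; $\mathcal C(\rho,\mathcal S)=\{\sigma\text{ density matrix}:\sigma_S=\rho_S\ \forall S\in\mathcal S\}$; $\mathcal S$ determines $\rho$ if $\mathcal C(\rho,\mathcal S)=\{\rho\}$; $L(\rho)=\min_{\mathcal S\text{ determines }\rho}\max_{S\in\mathcal S}|S|$. *)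

From HB Require Import structures.
From mathcomp Require Import all_boot all_order all_algebra.
From mathcomp Require Import boolp reals.
From mathcomp Require Import complex.
Set Implicit Arguments. Unset Strict Implicit. Unset Printing Implicit Defensive.
Import Order.TTheory GRing.Theory Num.Theory.
Local Open Scope ring_scope.

(* Computational basis states of n qubits: bit strings s = (s_1,...,s_n). *)
Definition bits (n : nat) := {ffun 'I_n -> bool}.

Definition weight n (x : bits n) : nat := (\sum_(j < n) (x j : nat))%N.

(* Operators on (C^2)^{\otimes n}, given by their matrix entries <x|A|y>
   in the computational basis, with C = R[i]. *)
Definition op (R : rcfType) (n : nat) := bits n -> bits n -> R[i].

Definition is_density (R : rcfType) n (s : op R n) : Prop :=
  [/\ (forall x y, s x y = (s y x)^*),
      (forall v : bits n -> R[i], 0 <= \sum_x \sum_y (v x)^* * s x y * v y)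
    & \sum_x s x x = 1].

Definition glue n (S : {set 'I_n}) (x z : bits n) : bits n :=
  [ffun j => if j \in S then x j else z j].

(* The reduced operator rho_S is
   represented by its entries <x_S|rho_S|y_S>, indexed by full strings x, y
   of which only the coordinates in S matter:
     <x_S|rho_S|y_S> = sum_{z in {0,1}^{[n]\S}} <x_S z|rho|y_S z>.
   (z ranges over strings vanishing on S, i.e. over assignments of [n]\S.) *)
Definition ptrace (R : rcfType) n (rho : op R n) (S : {set 'I_n}) : op R n :=
  fun x y => \sum_(z : bits n | [forall j in S, ~~ z j]) rho (glue S x z) (glue S y z).

Definition compatible (R : rcfType) n (rho sigma : op R n) (F : {set {set 'I_n}}) : Prop :=
  is_density sigma /\ (forall S, S \in F -> forall x y, ptrace sigma S x y = ptrace rho S x y).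

Definition determines (R : rcfType) n (rho : op R n) (F : {set {set 'I_n}}) : Prop :=
  compatible rho rho F /\
  (forall sigma, compatible rho sigma F -> forall x y, sigma x y = rho x y).

(* L(rho) = min over determining families F of max_{S in F} |S|
   (the default value n of the min is never used when rho is a density matrix,
   since F = {[n]} determines rho). *)
Definition Lnum (R : rcfType) n (rho : op R n) : nat :=
  \big[minn/n]_(F : {set {set 'I_n}} | `[< determines rho F >]) \max_(S in F) #|S|.

Definition dicke (R : rcfType) n (l : nat) : bits n -> R[i] :=
  fun x => if weight x == l then (((Num.sqrt ('C(n, l)%:R : R))^-1)%:C)%C else 0.

Definition dicke_mix (R : rcfType) n k (lam : nat -> R) : op R n :=
  fun x y => \sum_(l < k.+1) ((lam l)%:C)%C * @dicke R n l x * (@dicke R n l y)^*.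

Definition binz (m : nat) (j : int) : nat :=
  match j with Posz j' => 'C(m, j') | Negz _ => 0%N end.

Definition coef (R : rcfType) n k s l : R :=
  ('C(k, s) * binz (n - k) (l%:Z - s%:Z))%:R / ('C(n, l))%:R.

From HB Require Import structures.
From mathcomp Require Import all_boot all_order all_algebra.
From mathcomp Require Import boolp reals.
From mathcomp Require Import complex.
From mathcomp Require Import zify ring perm.
Import Order.TTheory GRing.Theory Num.Theory.
Local Open Scope ring_scope.
Set Implicit Arguments. Unset Strict Implicit. Unset Printing Implicit Defensive.

(* The marginal on S of a Dicke mixture sum_l b_l |D^l><D^l| depends on b only through the
   binomial transform s |-> sum_l C(n-|S|, l-s) b_l / C(n,l), and by Pascal's rule agreement
   of these transforms for |S| = k implies agreement for every smaller S.  A nonnegative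
   solution a of the system is thus a Dicke mixture sharing with rho all its marginals on at
   most k qubits, so if such marginals determine rho then a = lambda.

   Conversely, the k-qubit marginals determine rho.  Let sigma share them.  For k >= 2, sigma
   is permutation invariant: for a transposition t of two qubits, a suitable combination of
   k-marginals is a sum of the nonnegative numbers <d|sigma|d>, d = |v> - |t v>, and vanishes
   because it does for rho; positivity then puts |u> - |t u> in the kernel of sigma.  The
   diagonal of sigma therefore solves the system, so by uniqueness sigma vanishes beyond
   weight k, and the marginal on the first k qubits yields the remaining entries by downward
   induction on the weights.  For k = 1 uniqueness forces lambda_1 = 0, and the pure state
   |0...0> is determined by its one-qubit marginals. *)

Section BitStrings.
Variable n : nat.

Lemma weight_card (z : bits n) : weight z = #|[set j | z j]|.
Proof.
rewrite /weight -sum1_card [RHS]big_mkcond /=; apply: eq_bigr => j _.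
by rewrite inE; case: (z j).
Qed.

Lemma weight_leq (z : bits n) : (weight z <= n)%N.
Proof. by rewrite weight_card -[X in (_ <= X)%N]card_ord max_card. Qed.

Lemma weight_eq0 (z : bits n) : weight z = 0%N -> z = [ffun => false].
Proof.
move=> /eqP; rewrite /weight sum_nat_eq0 => /forallP z0.
by apply/ffunP => j; rewrite ffunE; move: (z0 j); case: (z j).
Qed.

Lemma weight_false : weight ([ffun => false] : bits n) = 0%N.
Proof. by rewrite /weight big1 // => j _; rewrite ffunE. Qed.

Definition weight_in (S : {set 'I_n}) (x : bits n) := (\sum_(j in S) (x j : nat))%N.

Lemma weight_in_leq (S : {set 'I_n}) x : (weight_in S x <= #|S|)%N.
Proof. by rewrite /weight_in -sum1_card; apply: leq_sum => j _; case: (x j). Qed.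

Lemma weight_in_id (S : {set 'I_n}) (x : bits n) :
  (forall j, j \notin S -> ~~ x j) -> weight_in S x = weight x.
Proof.
move=> xS; rewrite /weight (bigID (mem S)) /= [X in (_ + X)%N]big1 ?addn0 //.
by move=> j /xS /negbTE ->.
Qed.

Lemma weight_glue (S : {set 'I_n}) (x z : bits n) :
  [forall j in S, ~~ z j] -> weight (glue S x z) = (weight_in S x + weight z)%N.
Proof.
move=> /forall_inP zS.
rewrite /weight (bigID (mem S)) /= [in RHS](bigID (mem S)) /=.
rewrite [X in (_ + (X + _))%N]big1 ?add0n; last by move=> j /zS /negbTE ->.
rewrite /weight_in; congr (_ + _)%N; apply: eq_bigr => j; rewrite ffunE.
  by move=> ->.
by move=> /negbTE ->.
Qed.

Lemma card_weight_off (S : {set 'I_n}) (t : nat) :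
  #|[set z : bits n | [forall j in S, ~~ z j] & weight z == t]| = 'C(n - #|S|, t).
Proof.
set D := [set z : bits n | _ & _].
have support_inj : injective (fun z : bits n => [set j | z j]).
  by move=> z1 z2 /setP z12; apply/ffunP => j; move: (z12 j); rewrite !inE.
rewrite -(card_imset D support_inj).
have -> : [set [set j | z j] | z : bits n in D] =
          [set A : {set 'I_n} | A \subset ~: S & #|A| == t].
  apply/setP => A; rewrite inE; apply/imsetP/andP.
    case=> z; rewrite inE => /andP [/forall_inP zS /eqP wz] ->; split.
      by apply/subsetP => j; rewrite !inE; apply: contraL => /zS.
    by rewrite -weight_card wz.
  case=> /subsetP sA /eqP cA; exists [ffun j => j \in A].
    rewrite inE; apply/andP; split.
      by apply/forall_inP => j jS; rewrite ffunE; apply/negP => /sA; rewrite inE jS.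
    by rewrite weight_card -cA; apply/eqP/eq_card => j; rewrite !inE ffunE.
  by apply/setP => j; rewrite !inE ffunE.
by rewrite cards_draws cardsCs card_ord setCK.
Qed.

Definition prefix_bits (l : nat) : bits n := [ffun j : 'I_n => (j < l)%N].

Definition prefix_set (k : nat) : {set 'I_n} := [set j : 'I_n | (j < k)%N].

Lemma weight_prefix_bits l : (l <= n)%N -> weight (prefix_bits l) = l.
Proof.
move=> ln; rewrite /weight; under eq_bigr do rewrite ffunE.
rewrite -(big_mkord xpredT (fun j => nat_of_bool (j < l)%N)) (@big_cat_nat _ _ _ l) //=.
rewrite [X in (_ + X)%N]big1_seq ?addn0; last first.
  by move=> i; rewrite mem_index_iota => /and3P [_ li _]; rewrite ltnNge li.
rewrite (eq_big_nat _ _ (F2 := fun _ => 1%N)); last by move=> i /andP [_ ->].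
by rewrite sum_nat_const_nat muln1 subn0.
Qed.

Lemma prefix_bits_off k l : (l <= k)%N -> forall j, j \notin prefix_set k -> ~~ prefix_bits l j.
Proof. by move=> lk j; rewrite inE ffunE -!leqNgt; apply: leq_trans. Qed.

Lemma weight_in_prefix_bits k l : (l <= k)%N -> (l <= n)%N ->
  weight_in (prefix_set k) (prefix_bits l) = l.
Proof. by move=> lk ln; rewrite weight_in_id ?weight_prefix_bits //; apply: prefix_bits_off. Qed.

Lemma card_prefix_set k : (k <= n)%N -> #|prefix_set k| = k.
Proof.
move=> kn; rewrite -{2}(weight_prefix_bits kn) weight_card.
by apply: eq_card => j; rewrite !inE ffunE.
Qed.

End BitStrings.

Lemma binC_neq0 (R : numDomainType) m l : (l <= m)%N -> ('C(m, l)%:R : R) != 0.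
Proof. by move=> lm; rewrite pnatr_eq0 -lt0n bin_gt0. Qed.

Arguments binC_neq0 R {m l}.

Definition shift_bin (j s l : nat) : nat := if (s <= l)%N then 'C(j, l - s) else 0%N.

Lemma shift_binS j s l : shift_bin j.+1 s l = (shift_bin j s l + shift_bin j s.+1 l)%N.
Proof.
rewrite /shift_bin; case: (ltngtP s l) => sl //=.
  have -> : (l - s = (l - s.+1).+1)%N by lia.
  by rewrite binS addnC.
by rewrite sl subnn !bin0.
Qed.

Lemma binz_shift_bin j s l : binz j (l%:Z - s%:Z) = shift_bin j s l.
Proof.
rewrite /shift_bin; case: leqP => sl; first by rewrite subzn.
rewrite /binz; case E: (l%:Z - s%:Z)%R => [m|m] //.
have : (l%:Z - s%:Z < 0)%R by rewrite subr_lt0 ltz_nat.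
by rewrite E.
Qed.

Lemma sum_glue_weight (V : nmodType) n (S : {set 'I_n}) (x : bits n) (G : nat -> V) :
  \sum_(z : bits n | [forall j in S, ~~ z j]) G (weight_in S x + weight z)%N =
  \sum_(l < n.+1) G l *+ shift_bin (n - #|S|) (weight_in S x) l.
Proof.
set P := fun z : bits n => [forall j in S, ~~ z j].
set w := weight_in S x.
have w_lt z : P z -> (w + weight z < n.+1)%N.
  by move=> Pz; rewrite ltnS -weight_glue //; apply: weight_leq.
rewrite (partition_big (fun z => inord (w + weight z) : 'I_n.+1) xpredT) //=.
apply: eq_bigr => l _.
rewrite (eq_bigr (fun=> G l)); last first.
  by move=> z /andP [Pz /eqP <-]; rewrite inordK //; apply: w_lt.
rewrite sumr_const; congr (_ *+ _); rewrite /shift_bin -/w.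
have weight_l z : P z -> (inord (w + weight z) == l :> 'I_n.+1) = (w + weight z == l)%N.
  by move=> Pz; rewrite -(inj_eq val_inj) /= inordK //; apply: w_lt.
case: leqP => wl.
  rewrite -(card_weight_off S (l - w)); apply: eq_card => z; rewrite inE /in_mem /=.
  apply: andb_id2l => Pz; rewrite (weight_l z Pz).
  by apply/idP/idP => /eqP wz; apply/eqP; lia.
apply: eq_card0 => z; rewrite /in_mem /=; apply/negP => /andP [Pz].
by rewrite (weight_l z Pz) => /eqP; lia.
Qed.

Lemma sum_weight (V : nmodType) n (G : nat -> V) :
  \sum_(x : bits n) G (weight x) = \sum_(l < n.+1) G l *+ 'C(n, l).
Proof.
transitivity (\sum_(z : bits n | [forall j in set0, ~~ z j])
                G (weight_in (set0 : {set 'I_n}) [ffun => false] + weight z)%N).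
  apply: eq_big => [z | z _]; first by apply/esym/forall_inP => j; rewrite inE.
  by rewrite /weight_in big_set0.
rewrite sum_glue_weight /weight_in big_set0 cards0 subn0.
by apply: eq_bigr => l _; rewrite /shift_bin leq0n subn0.
Qed.

Section HermitianForms.
Variables (C : numClosedFieldType) (T : finType).
Implicit Types (A : T -> T -> C) (v w : T -> C).

Definition sesq A v w : C := \sum_x \sum_y (v x)^* * A x y * w y.

Definition hermitian A := forall x y, A x y = (A y x)^*.

Definition psd A := forall v, 0 <= sesq A v v.

Lemma sesqDl A v1 v2 w : sesq A (fun x => v1 x + v2 x) w = sesq A v1 w + sesq A v2 w.
Proof.
rewrite /sesq -big_split; apply: eq_bigr => x _; rewrite -big_split.
by apply: eq_bigr => y _; rewrite rmorphD /= !mulrDl.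
Qed.

Lemma sesqDr A v w1 w2 : sesq A v (fun y => w1 y + w2 y) = sesq A v w1 + sesq A v w2.
Proof.
rewrite /sesq -big_split; apply: eq_bigr => x _; rewrite -big_split.
by apply: eq_bigr => y _; rewrite mulrDr.
Qed.

Lemma sesqZl A a v w : sesq A (fun x => a * v x) w = a^* * sesq A v w.
Proof.
rewrite /sesq mulr_sumr; apply: eq_bigr => x _; rewrite mulr_sumr.
by apply: eq_bigr => y _; rewrite rmorphM /= !mulrA.
Qed.

Lemma sesqZr A a v w : sesq A v (fun y => a * w y) = a * sesq A v w.
Proof.
rewrite /sesq mulr_sumr; apply: eq_bigr => x _; rewrite mulr_sumr.
by apply: eq_bigr => y _; rewrite mulrCA.
Qed.

Lemma sesq_conj A v w : hermitian A -> sesq A v w = (sesq A w v)^*.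
Proof.
move=> hA; rewrite /sesq rmorph_sum /= exchange_big; apply: eq_bigr => x _.
rewrite rmorph_sum; apply: eq_bigr => y _ /=.
by rewrite !rmorphM /= conjCK -hA [RHS]mulrC [w x * _]mulrC mulrA.
Qed.

Definition delta (a : T) : T -> C := fun x => (x == a)%:R.

Lemma sum_mul_delta (F : T -> C) a : \sum_x F x * delta a x = F a.
Proof.
rewrite (bigD1 a) //= /delta eqxx mulr1 big1 ?addr0 // => x /negbTE ->.
by rewrite mulr0.
Qed.

Lemma sesq_deltal A a v : sesq A (delta a) v = \sum_y A a y * v y.
Proof.
rewrite /sesq (bigD1 a) //= [X in _ + X]big1 ?addr0.
  by apply: eq_bigr => y _; rewrite /delta eqxx rmorph1 mul1r.
by move=> x /negbTE xa; rewrite /delta xa rmorph0 big1 // => y _; rewrite !mul0r.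
Qed.

Lemma sesq_delta A a b : sesq A (delta a) (delta b) = A a b.
Proof. by rewrite sesq_deltal sum_mul_delta. Qed.

Lemma psd_isotropic_kernel A v : hermitian A -> psd A -> sesq A v v = 0 ->
  forall y, \sum_x A y x * v x = 0.
Proof.
move=> hA hpos hv y.
rewrite -sesq_deltal; set w := delta y.
set c := sesq A w v; set b := sesq A w w.
have b0 : 0 <= b by apply: hpos.
set t : C := (b + 1)^-1.
have t0 : 0 < t by rewrite invr_gt0 ltr_wpDl.
have tb : t * b < 1 by rewrite mulrC ltr_pdivrMr ?ltr_wpDl // mul1r ltrDl ltr01.
(* Positivity on [v - t c w] gives [|c|^2 t (t b - 2) >= 0], while [t (t b - 2) < 0]. *)
have := hpos (fun x => v x + (- t * c) * w x).
rewrite sesqDl !sesqDr !sesqZl !sesqZr hv (sesq_conj v w hA) -/c -/b.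
have -> : 0 + (- t * c) * c^* + ((- t * c)^* * c + (- t * c)^* * ((- t * c) * b))
  = (c * c^*) * (t * (t * b - 2)).
  have tr : t^* = t by apply/CrealP; rewrite realE (ltW t0).
  by rewrite rmorphM rmorphN /= tr; ring.
have hneg : t * (t * b - 2) < 0.
  by rewrite pmulr_rlt0 // subr_lt0; apply: (lt_trans tb); rewrite ltr1n.
rewrite mulrC (nmulr_rge0 _ hneg) => hle.
by apply/eqP; rewrite -mul_conjC_eq0 eq_le hle mul_conjC_ge0.
Qed.

Definition delta_diff (a b : T) : T -> C := fun x => delta a x + (-1) * delta b x.

Lemma sesq_delta_diff A a b :
  sesq A (delta_diff a b) (delta_diff a b) = A a a - A a b - A b a + A b b.
Proof. by rewrite /delta_diff sesqDl !sesqDr !sesqZl !sesqZr !sesq_delta rmorphN rmorph1; ring. Qed.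

Lemma sum_mul_delta_diff A y a b : \sum_x A y x * delta_diff a b x = A y a - A y b.
Proof.
rewrite /delta_diff; under eq_bigr => x _ do rewrite mulrDr mulrCA.
by rewrite big_split /= -mulr_sumr !(sum_mul_delta (fun x => A y x)); ring.
Qed.

Lemma psd_diag_ge0 A x : psd A -> 0 <= A x x.
Proof. by move=> hA; rewrite -sesq_delta; apply: hA. Qed.

Lemma psd_diag_eq0 A u : hermitian A -> psd A -> A u u = 0 ->
  forall y, A y u = 0 /\ A u y = 0.
Proof.
move=> herm hpos u0 y.
have := psd_isotropic_kernel herm hpos (v := delta u) (ltac:(by rewrite sesq_delta)) y.
rewrite (sum_mul_delta (fun x => A y x)) => Ayu; split => //.
by rewrite herm Ayu rmorph0.
Qed.

Lemma psd_point_mass A x0 : hermitian A -> psd A -> \sum_x A x x = 1 ->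
  (forall u, u != x0 -> A u u = 0) -> forall x y, A x y = ((x == x0) && (y == x0))%:R.
Proof.
move=> herm hpsd tr off x y.
have [->|xx0] := eqVneq x x0; last by rewrite (psd_diag_eq0 herm hpsd (off x xx0) y).2.
have [->|yx0] := eqVneq y x0; last by rewrite andbF (psd_diag_eq0 herm hpsd (off y yx0) x0).1.
by rewrite -tr (bigD1 x0) //= big1 ?addr0 // => u /off.
Qed.

End HermitianForms.

Arguments delta {C T} a.
Arguments delta_diff {C T} a b.

Definition weight_invariant (V : Type) n (A : bits n -> bits n -> V) :=
  forall u u' v v', weight u = weight u' -> weight v = weight v' -> A u v = A u' v'.

Lemma sum_ord_eq_nat (V : nmodType) (N w : nat) (F : nat -> V) :
  \sum_(l < N) (if (l : nat) == w then F l else 0) = if (w < N)%N then F w else 0.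
Proof.
case: (ltnP w N) => wN.
  rewrite (bigD1 (Ordinal wN)) //= eqxx big1 ?addr0 // => l /negbTE.
  by rewrite -(inj_eq val_inj) /= => ->.
by rewrite big1 // => l _; case: eqP => // lw; move: (ltn_ord l); rewrite lw ltnNge wN.
Qed.

Section DickeMixtures.
Variables (R : rcfType) (n : nat).

(* [conjc_real] is stated for the conjugation of complex.v, not for [Num.conj]. *)
Lemma conjC_complex (a : R) : ((a%:C)%C)^* = (a%:C)%C :> R[i].
Proof. exact: conjc_real. Qed.

Lemma dicke_mix_entry K (c : nat -> R) (x y : bits n) :
  dicke_mix K c x y =
  if (weight x == weight y) && (weight x < K.+1)%N
  then ((c (weight x) / 'C(n, weight x)%:R)%:C)%C else 0.
Proof.
pose e l := if weight y == l then ((c l / 'C(n, l)%:R)%:C)%C else 0.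
transitivity (\sum_(l < K.+1) (if (l : nat) == weight x then e l else 0)).
  apply: eq_bigr => l _; rewrite /dicke /e eq_sym.
  case: (eqVneq (weight x) l) => [<-|_]; last by rewrite mulr0 mul0r.
  case: ifP => _; last by rewrite rmorph0 mulr0.
  rewrite conjC_complex -!rmorphM /= -mulrA -invfM -expr2 sqr_sqrtr //.
rewrite sum_ord_eq_nat /e eq_sym.
by case: (weight x == weight y); case: ifP.
Qed.

Lemma dicke_mix_weight_invariant K (c : nat -> R) : weight_invariant (@dicke_mix R n K c).
Proof. by move=> u u' v v' wu wv; rewrite !dicke_mix_entry wu wv. Qed.

Lemma dicke_mix_density K (c : nat -> R) :
  (K <= n)%N -> (forall l, (l <= K)%N -> 0 <= c l) -> \sum_(l < K.+1) c l = 1 ->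
  is_density (@dicke_mix R n K c).
Proof.
move=> Kn c0 c1; split.
- move=> x y; rewrite !dicke_mix_entry eq_sym.
  case: (eqVneq (weight y) (weight x)) => [->|_] /=; last by rewrite rmorph0.
  by case: ifP => _; rewrite ?conjC_complex ?rmorph0.
- move=> v; rewrite /dicke_mix.
  set W := fun l : nat => \sum_y (@dicke R n l y)^* * v y.
  under eq_bigr => x _ do under eq_bigr => y _ do rewrite mulr_sumr mulr_suml.
  under eq_bigr => x _ do rewrite exchange_big.
  rewrite exchange_big /=; apply: sumr_ge0 => l _.
  rewrite [X in 0 <= X](_ : _ = ((c l)%:C)%C * ((W l)^* * W l)).
    apply: mulr_ge0; first by rewrite ler0c c0 // -ltnS ltn_ord.
    by rewrite mulrC mul_conjC_ge0.
  rewrite /W /= rmorph_sum /= mulr_suml mulr_sumr; apply: eq_bigr => x _.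
  rewrite mulr_sumr mulr_sumr; apply: eq_bigr => y _.
  by rewrite rmorphM /= conjCK; ring.
- under eq_bigr => x _ do rewrite dicke_mix_entry eqxx /=.
  pose G w := if (w < K.+1)%N then ((c w / 'C(n, w)%:R)%:C)%C else 0.
  rewrite (sum_weight n G).
  transitivity (\sum_(l < n.+1) if (l < K.+1)%N then ((c l)%:C)%C else 0).
    apply: eq_bigr => l _; rewrite /G; case: ifP => lK; last by rewrite mul0rn.
    rewrite -rmorphMn /= -mulr_natr mulfVK // binC_neq0 //.
    by rewrite ltnS in lK; apply: leq_trans lK Kn.
  rewrite -big_mkcond /= -(big_ord_widen n.+1 (fun l => ((c l)%:C)%C)) //.
  by rewrite -rmorph_sum /= c1.
Qed.

Lemma ptrace_dicke_mix K (c : nat -> R) (S : {set 'I_n}) (x y : bits n) :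
  ptrace (@dicke_mix R n K c) S x y =
  if weight_in S x == weight_in S y then
    \sum_(l < n.+1) (if (l < K.+1)%N then ((c l / 'C(n, l)%:R)%:C)%C else 0)
                      *+ shift_bin (n - #|S|) (weight_in S x) l
  else 0.
Proof.
rewrite /ptrace; under eq_bigr => z zS do rewrite dicke_mix_entry !weight_glue //.
case: eqVneq => [<-|ne].
  under eq_bigr => z _ do rewrite eqxx /=.
  exact: (sum_glue_weight S x (fun w => if (w < K.+1)%N then ((c w / 'C(n, w)%:R)%:C)%C else 0)).
by apply: big1 => z _; rewrite eqn_add2r (negbTE ne).
Qed.

End DickeMixtures.

Section BinomialTransform.
Variables (V : nmodType) (n : nat).

Definition bin_transform (b : nat -> V) j s := \sum_(l < n.+1) b l *+ shift_bin j s l.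

Lemma bin_transformS b j s : bin_transform b j.+1 s = bin_transform b j s + bin_transform b j s.+1.
Proof. by rewrite /bin_transform -big_split; apply: eq_bigr => l _; rewrite shift_binS mulrnDr. Qed.

Lemma bin_transform_eq0_down b k : (k <= n)%N ->
  (forall s, (s <= k)%N -> bin_transform b (n - k) s = 0) ->
  forall m, (m <= k)%N -> forall s, (s <= m)%N -> bin_transform b (n - m) s = 0.
Proof.
move=> kn bk m mk; have : (k - m + m = k)%N by lia.
move: (k - m)%N => d; elim: d m mk => [|d IH] m mk km s sm.
  have -> : m = k by lia.
  by apply: bk; lia.
have -> : (n - m = (n - m.+1).+1)%N by lia.
by rewrite bin_transformS !IH ?addr0 //; lia.
Qed.

End BinomialTransform.

Definition pad (R : nmodType) k (lam : nat -> R) l := if (l <= k)%N then lam l else 0.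

Definition solves (R : rcfType) n k (lam a : nat -> R) :=
  forall s, (s <= k)%N ->
    \sum_(l < n.+1) a l * coef R n k s l = \sum_(l < k.+1) lam l * coef R n k s l.

Definition unique_solution (R : rcfType) n k (lam : nat -> R) :=
  forall a, (forall l, (l <= n)%N -> 0 <= a l) -> solves n k lam a ->
  forall l, (l <= n)%N -> a l = pad k lam l.

Section Forward.
Variables (R : rcfType) (n k : nat) (lam a : nat -> R).
Hypotheses (kn : (k <= n)%N) (lam1 : \sum_(l < k.+1) lam l = 1).
Hypotheses (a0 : forall l, (l <= n)%N -> 0 <= a l) (a_solves : solves n k lam a).

Let gap l := (a l - pad k lam l) / 'C(n, l)%:R.

Lemma solution_bin_transform_eq0 m : (m <= k)%N ->
  forall s, (s <= m)%N -> bin_transform n gap (n - m) s = 0.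
Proof.
apply: bin_transform_eq0_down => // s sk; have := a_solves sk.
rewrite (big_ord_widen n.+1 (fun l => lam l * coef R n k s l)) // [RHS]big_mkcond /=.
move/eqP; rewrite -subr_eq0 -sumrB => /eqP gap0.
apply: (mulfI (binC_neq0 R sk)); rewrite mulr0 -[RHS]gap0 mulr_sumr; apply: eq_bigr => l _.
rewrite /gap /pad /coef binz_shift_bin ltnS -mulr_natr.
by case: ifP => _; rewrite ?mul0r ?subr0 natrM; ring.
Qed.

Lemma solution_sum1 : \sum_(l < n.+1) a l = 1.
Proof.
have := solution_bin_transform_eq0 (leq0n k) (leqnn 0); rewrite subn0 /bin_transform.
rewrite (eq_bigr (fun l : 'I_n.+1 => a l - pad k lam l)); last first.
  move=> l _; rewrite /gap /shift_bin leq0n /= subn0 -[_ / _ *+ _]mulr_natr mulfVK //.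
  by rewrite binC_neq0 // -ltnS.
rewrite sumrB => /eqP; rewrite subr_eq0 => /eqP ->.
rewrite -lam1 (big_ord_widen n.+1 lam) // [RHS]big_mkcond /=.
by apply: eq_bigr => l _; rewrite /pad ltnS.
Qed.

Lemma ptrace_dicke_mix_solution (S : {set 'I_n}) x y : (#|S| <= k)%N ->
  ptrace (@dicke_mix R n n a) S x y = ptrace (@dicke_mix R n k lam) S x y.
Proof.
move=> Sk; rewrite !ptrace_dicke_mix; case: ifP => // _.
apply/eqP; rewrite -subr_eq0 -sumrB; apply/eqP.
transitivity ((bin_transform n gap (n - #|S|) (weight_in S x))%:C)%C.
  rewrite /bin_transform rmorph_sum; apply: eq_bigr => l _ /=.
  rewrite ltn_ord -mulrnBl rmorphMn /= /gap /pad ltnS; congr (_ *+ _).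
  by case: ifP => _; rewrite ?subr0 -?rmorphB ?mulrBl.
by rewrite solution_bin_transform_eq0 ?weight_in_leq.
Qed.

Lemma determines_solution_eq (F : {set {set 'I_n}}) :
  determines (@dicke_mix R n k lam) F -> (forall S, S \in F -> (#|S| <= k)%N) ->
  forall l, (l <= n)%N -> a l = pad k lam l.
Proof.
move=> [_ rho_det] Fk l ln.
have sigma_compat : compatible (@dicke_mix R n k lam) (@dicke_mix R n n a) F.
  split; first exact: dicke_mix_density (leqnn n) a0 solution_sum1.
  by move=> S /Fk Sk x y; apply: ptrace_dicke_mix_solution.
have := rho_det _ sigma_compat (prefix_bits n l) (prefix_bits n l).
rewrite !dicke_mix_entry weight_prefix_bits // eqxx /= ltnS ln ltnS /pad.
case: ifP => _ /(congr1 (@complex.Re R)) /= al; apply: (mulIf (invr_neq0 (binC_neq0 R ln))).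
  exact: al.
by rewrite mul0r.
Qed.

End Forward.

Section Swaps.
Variable n : nat.
Implicit Types (i j : 'I_n) (u : bits n).

Definition swap i j u : bits n := [ffun m => u (tperm i j m)].

Lemma weight_swap i j u : weight (swap i j u) = weight u.
Proof.
rewrite /weight (reindex_inj (@perm_inj _ (tperm i j))) /=.
by apply: eq_bigr => m _; rewrite ffunE tpermK.
Qed.

Lemma glue_swap (S : {set 'I_n}) i j (x z : bits n) : i \in S -> j \in S ->
  glue S (swap i j x) z = swap i j (glue S x z).
Proof.
move=> iS jS; apply/ffunP => m; rewrite !ffunE.
by case: (tpermP i j m) => [->|->|/eqP ni /eqP nj]; rewrite ?iS ?jS.
Qed.

Definition mismatch u u' := (\sum_m (u m && ~~ u' m))%N.

Lemma mismatch_sym u u' : weight u = weight u' -> mismatch u u' = mismatch u' u.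
Proof.
move=> wu; have split_weight m : (u m + (u' m && ~~ u m) = u' m + (u m && ~~ u' m))%N.
  by case: (u m); case: (u' m).
have := congr1 (fun f => \sum_m f m)%N (funext split_weight) => /=.
by rewrite !big_split /= -/(weight u) -/(weight u') wu => /addnI.
Qed.

Lemma mismatch0 u u' : weight u = weight u' -> mismatch u u' = 0%N -> u = u'.
Proof.
move=> wu uu'; have := uu'; rewrite mismatch_sym // => u'u.
apply/ffunP => m; move/eqP: uu'; move/eqP: u'u.
rewrite !sum_nat_eq0 => /forallP /(_ m) /eqP + /forallP /(_ m) /eqP.
by case: (u m); case: (u' m).
Qed.

(* Swapping a position where only [u] is set with one where only [u'] is set
   decreases the mismatch. *)
Lemma swap_invariant_weight (T : Type) (f : bits n -> T) :
  (forall i j u, f (swap i j u) = f u) ->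
  forall u u', weight u = weight u' -> f u = f u'.
Proof.
move=> f_swap u u' wu.
move: {2}(mismatch u u') (leqnn (mismatch u u')) => d.
elim: d u wu => [|d IH] u wu.
  by rewrite leqn0 => /eqP /(mismatch0 wu) ->.
case: (posnP (mismatch u u')) => [/(mismatch0 wu) -> //|pos du].
have witness (v v' : bits n) : (0 < mismatch v v')%N -> exists m, v m && ~~ v' m.
  rewrite lt0n sum_nat_eq0 => /forallPn [m]; rewrite eqb0 negbK => vm.
  by exists m.
have [i /andP [ui u'i]] := witness _ _ pos.
have [j /andP [u'j uj]] := witness u' u (ltac:(by rewrite -mismatch_sym)).
rewrite -(f_swap i j u); apply: IH; first by rewrite weight_swap.
suff : (mismatch (swap i j u) u' < mismatch u u')%N by lia.
rewrite /mismatch (bigD1 i) //= [X in (_ < X)%N](bigD1 i) //= ui u'i /=.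
rewrite ffunE tpermL (negbTE uj) /= add0n ltnS; apply: leq_sum => m mi; rewrite ffunE.
case: (tpermP i j m) => [mi'|->|_ _] //; first by rewrite mi' eqxx in mi.
by rewrite ui u'j.
Qed.

End Swaps.

Lemma exists_superset (T : finType) (A : {set T}) m : (#|A| <= m <= #|T|)%N ->
  exists2 S : {set T}, A \subset S & #|S| = m.
Proof.
move=> /andP [Am mT].
have : (0 < #|[set B : {set T} | B \subset ~: A & #|B| == m - #|A|]|)%N.
  by rewrite cards_draws bin_gt0; have := cardsC A; lia.
case/card_gt0P => B; rewrite inE => /andP [BA /eqP cB].
have AB0 : A :&: B = set0.
  apply/setP => x; rewrite !inE; apply/negbTE/andP => -[xA /(subsetP BA)].
  by rewrite inE xA.
exists (A :|: B); first exact: subsetUl.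
by rewrite cardsU AB0 cards0 subn0 cB; lia.
Qed.

Section Symmetry.
Variables (R : rcfType) (n k : nat) (rho sigma : op R n).
Hypotheses (k2 : (2 <= k)%N) (kn : (k <= n)%N).
Hypotheses (sigma_density : is_density sigma) (rho_inv : weight_invariant rho).
Hypothesis marg_eq : forall S : {set 'I_n}, #|S| = k ->
  forall x y, ptrace sigma S x y = ptrace rho S x y.

Lemma density_swap_col i j u y : sigma y (swap i j u) = sigma y u.
Proof.
case: sigma_density => herm hpsd _.
have [S ijS cS] : exists2 S : {set 'I_n}, [set i; j] \subset S & #|S| = k.
  apply: exists_superset; rewrite card_ord kn andbT (leq_trans _ k2) // cards2.
  by case: (i != j).
have iS : i \in S by apply: (subsetP ijS); rewrite !inE eqxx.
have jS : j \in S by apply: (subsetP ijS); rewrite !inE eqxx orbT.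
pose d z : bits n -> R[i] := delta_diff (glue S u z) (glue S (swap i j u) z).
pose E z := sesq sigma (d z) (d z).
(* Summed over [z], [E z] is a combination of entries of the marginal on [S], which
   is that of [rho], and [rho] cannot tell a string from its swap. *)
have sumE : \sum_(z : bits n | [forall m in S, ~~ z m]) E z = 0.
  set su := swap i j u.
  transitivity (ptrace sigma S u u - ptrace sigma S u su - ptrace sigma S su u
                + ptrace sigma S su su).
    rewrite /E /d /ptrace; under eq_bigr => z _ do rewrite sesq_delta_diff.
    by rewrite big_split !sumrB.
  rewrite !marg_eq // /ptrace -!sumrB -big_split /=.
  apply: big1 => z _; rewrite glue_swap //.
  set g := glue S u z.
  have swap_g : weight (swap i j g) = weight g by rewrite weight_swap.
  rewrite (rho_inv swap_g swap_g) (rho_inv (erefl (weight g)) swap_g).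
  by rewrite (rho_inv swap_g (erefl (weight g))); ring.
pose z0 : bits n := [ffun m => if m \in S then false else u m].
have z0S : [forall m in S, ~~ z0 m] by apply/forall_inP => m mS; rewrite ffunE mS.
have glue_z0 x : glue S x z0 = glue S x u.
  by apply/ffunP => m; rewrite !ffunE; case: (m \in S).
have glue_u : glue S u u = u by apply/ffunP => m; rewrite ffunE; case: (m \in S).
have glue_swap_u : glue S (swap i j u) u = swap i j u.
  by rewrite glue_swap // glue_u.
have E0 := psumr_eq0P (fun z _ => hpsd _) sumE z0S.
move: E0; rewrite /E /d !glue_z0 glue_u glue_swap_u => E0.
have := psd_isotropic_kernel herm hpsd E0 y.
by rewrite sum_mul_delta_diff => /eqP; rewrite subr_eq0 => /eqP.
Qed.

Lemma density_weight_invariant : weight_invariant sigma.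
Proof.
case: sigma_density => herm _ _ u u' v v' wu wv.
transitivity (sigma u' v).
  apply: (swap_invariant_weight (f := fun w => sigma w v)) => // i j w.
  by rewrite herm density_swap_col [RHS]herm.
by apply: (swap_invariant_weight (f := sigma u')) => // i j w; apply: density_swap_col.
Qed.

End Symmetry.

Section Support.
Variables (R : rcfType) (n k : nat) (lam : nat -> R) (sigma : op R n).
Hypotheses (kn : (k <= n)%N) (sigma_density : is_density sigma).
Hypothesis sigma_inv : weight_invariant sigma.
Hypothesis marg_eq : forall x y,
  ptrace sigma (prefix_set n k) x y = ptrace (@dicke_mix R n k lam) (prefix_set n k) x y.

Let diag l := complex.Re (sigma (prefix_bits n l) (prefix_bits n l)).

Lemma sigma_diag_ge0 x : 0 <= sigma x x.
Proof. by case: sigma_density => _ sigma_psd _; apply: psd_diag_ge0. Qed.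

Lemma sigma_diag_real l : sigma (prefix_bits n l) (prefix_bits n l) = ((diag l)%:C)%C.
Proof. by rewrite RRe_real // ger0_real // sigma_diag_ge0. Qed.

Lemma ptrace_prefix_diag s : (s <= k)%N ->
  ptrace sigma (prefix_set n k) (prefix_bits n s) (prefix_bits n s) =
  ((\sum_(l < n.+1) diag l *+ shift_bin (n - k) s l)%:C)%C.
Proof.
move=> sk; have sn := leq_trans sk kn.
rewrite rmorph_sum /=; under [RHS]eq_bigr do rewrite rmorphMn /=.
rewrite -[X in shift_bin (n - X)](card_prefix_set kn) -[in RHS](weight_in_prefix_bits sk sn).
rewrite -(sum_glue_weight _ _ (fun l => ((diag l)%:C)%C)); apply: eq_bigr => z zS.
have wz := weight_glue (prefix_bits n s) zS.
rewrite -sigma_diag_real; apply: sigma_inv; rewrite weight_prefix_bits -wz //;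
  exact: weight_leq.
Qed.

Lemma diag_solves : solves n k lam (fun l => 'C(n, l)%:R * diag l).
Proof.
move=> s sk; have sn := leq_trans sk kn.
have := marg_eq (prefix_bits n s) (prefix_bits n s).
rewrite ptrace_prefix_diag // ptrace_dicke_mix eqxx card_prefix_set //.
rewrite weight_in_prefix_bits //.
pose c l := if (l < k.+1)%N then lam l / 'C(n, l)%:R else 0.
rewrite (eq_bigr (fun l : 'I_n.+1 => ((c l)%:C)%C *+ shift_bin (n - k) s l)); last first.
  by move=> l _; rewrite /c; case: ifP.
rewrite -(eq_bigr _ (fun l _ => rmorphMn _ _ _)) -rmorph_sum => /complexI diag_eq.
rewrite (big_ord_widen n.+1 (fun l => lam l * coef R n k s l)) // [RHS]big_mkcond /=.
transitivity ('C(k, s)%:R * \sum_(l < n.+1) diag l *+ shift_bin (n - k) s l).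
  rewrite mulr_sumr; apply: eq_bigr => l _; rewrite /coef binz_shift_bin natrM -mulr_natr.
  by field; rewrite binC_neq0 // -ltnS.
rewrite diag_eq mulr_sumr; apply: eq_bigr => l _; rewrite /c /coef binz_shift_bin.
case: ifP => _; last by rewrite mul0rn mulr0.
by rewrite natrM -mulr_natr; field; rewrite binC_neq0 // -ltnS.
Qed.

Lemma diag_ge0 l : 0 <= diag l.
Proof. by rewrite -ler0c -sigma_diag_real sigma_diag_ge0. Qed.

Lemma unique_solution_support : unique_solution n k lam ->
  forall u v, (k < weight u)%N || (k < weight v)%N -> sigma u v = 0.
Proof.
move=> lam_unique.
have diag0 u : (k < weight u)%N -> sigma u u = 0.
  move=> ku; have un := weight_leq u.
  have := lam_unique _ (fun l _ => mulr_ge0 (ler0n _ _) (diag_ge0 l)) diag_solves _ un.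
  rewrite /pad leqNgt ku => /eqP; rewrite mulf_eq0 (negbTE (binC_neq0 R un)) /= => /eqP d0.
  have wu := esym (weight_prefix_bits un).
  by rewrite (sigma_inv wu wu) sigma_diag_real d0 rmorph0.
case: sigma_density => herm sigma_psd _ u v /orP [/diag0 u0|/diag0 v0].
  exact: (psd_diag_eq0 herm sigma_psd u0 v).2.
exact: (psd_diag_eq0 herm sigma_psd v0 u).1.
Qed.

End Support.

Lemma ptrace_prefix_bits (R : rcfType) n k (A : op R n) l l' :
  weight_invariant A -> (l <= k)%N -> (l' <= k)%N -> (k <= n)%N ->
  ptrace A (prefix_set n k) (prefix_bits n l) (prefix_bits n l') =
  \sum_(z : bits n | [forall j in prefix_set n k, ~~ z j])
    A (prefix_bits n (l + weight z)) (prefix_bits n (l' + weight z)).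
Proof.
move=> A_inv lk l'k kn; apply: eq_bigr => z zS.
have glueE m : (m <= k)%N -> weight (glue (prefix_set n k) (prefix_bits n m) z) =
                             weight (prefix_bits n (m + weight z)).
  move=> mk; have := weight_leq (glue (prefix_set n k) (prefix_bits n m) z).
  by rewrite weight_glue // weight_in_prefix_bits ?(leq_trans mk) // => /weight_prefix_bits ->.
by apply: A_inv; apply: glueE.
Qed.

Section Triangular.
Variables (R : rcfType) (n k : nat) (A B : op R n).
Hypotheses (kn : (k <= n)%N) (A_inv : weight_invariant A) (B_inv : weight_invariant B).
Hypothesis A_supp : forall u v, (k < weight u)%N || (k < weight v)%N -> A u v = 0.
Hypothesis B_supp : forall u v, (k < weight u)%N || (k < weight v)%N -> B u v = 0.
Hypothesis marg_eq : forall x y,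
  ptrace A (prefix_set n k) x y = ptrace B (prefix_set n k) x y.

Let eq_at l l' := A (prefix_bits n l) (prefix_bits n l') = B (prefix_bits n l) (prefix_bits n l').

(* In the marginal at (l, l'), the only term not already known to agree is z = 0. *)
Lemma eq_at_step l l' : (l <= k)%N -> (l' <= k)%N ->
  (forall w, (0 < w)%N -> (l + w <= k)%N -> (l' + w <= k)%N -> eq_at (l + w) (l' + w)) ->
  eq_at l l'.
Proof.
move=> lk l'k eq_above; have := marg_eq (prefix_bits n l) (prefix_bits n l').
rewrite !ptrace_prefix_bits //.
have z0S : [forall j in prefix_set n k, ~~ ([ffun => false] : bits n) j].
  by apply/forall_inP => j _; rewrite ffunE.
rewrite (bigD1 _ z0S) /= [in RHS](bigD1 _ z0S) /= weight_false !addn0.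
suff -> : \sum_(z : bits n | [forall j in prefix_set n k, ~~ z j] && (z != [ffun => false]))
      A (prefix_bits n (l + weight z)) (prefix_bits n (l' + weight z)) =
    \sum_(z : bits n | [forall j in prefix_set n k, ~~ z j] && (z != [ffun => false]))
      B (prefix_bits n (l + weight z)) (prefix_bits n (l' + weight z)).
  exact: addIr.
apply: eq_bigr => z /andP [zS nz].
have wz : (0 < weight z)%N by rewrite lt0n; apply: contra nz => /eqP /weight_eq0 ->.
have bound m : (m <= k)%N -> (m + weight z <= n)%N.
  move=> mk; have := weight_leq (glue (prefix_set n k) (prefix_bits n m) z).
  by rewrite weight_glue // weight_in_prefix_bits // (leq_trans mk).
have [lk'|kl] := leqP (l + weight z) k; have [l'k'|kl'] := leqP (l' + weight z) k.
- exact: eq_above.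
- by rewrite A_supp ?B_supp // !weight_prefix_bits ?bound // kl' orbT.
- by rewrite A_supp ?B_supp // !weight_prefix_bits ?bound // kl.
- by rewrite A_supp ?B_supp // !weight_prefix_bits ?bound // kl.
Qed.

Lemma eq_at_prefix l l' : (l <= k)%N -> (l' <= k)%N -> eq_at l l'.
Proof.
move: {2}(k - l + (k - l'))%N (leqnn (k - l + (k - l'))%N) => d.
elim: d l l' => [|d IH] l l' ld lk l'k; apply: eq_at_step => // w w0 lwk l'wk.
  lia.
by apply: IH => //; lia.
Qed.

Lemma eq_of_prefix_marginal u v : A u v = B u v.
Proof.
have [uk|ku] := leqP (weight u) k; last by rewrite A_supp ?B_supp ?ku.
have [vk|kv] := leqP (weight v) k; last by rewrite A_supp ?B_supp ?kv ?orbT.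
have wu := esym (weight_prefix_bits (weight_leq u)).
have wv := esym (weight_prefix_bits (weight_leq v)).
by rewrite (A_inv wu wv) (B_inv wu wv); apply: eq_at_prefix.
Qed.

End Triangular.

Section Marginals.
Variables (R : rcfType) (n : nat).

Lemma ptrace_diag_eq0 (sigma : op R n) (S : {set 'I_n}) u :
  is_density sigma -> ptrace sigma S u u = 0 -> sigma u u = 0.
Proof.
case=> _ sigma_psd _ marg0.
pose z0 : bits n := [ffun m => if m \in S then false else u m].
have z0S : [forall m in S, ~~ z0 m] by apply/forall_inP => m mS; rewrite ffunE mS.
have glue_z0 : glue S u z0 = u by apply/ffunP => m; rewrite !ffunE; case: (m \in S).
by rewrite -glue_z0; apply: (psumr_eq0P _ marg0) => // z _; apply: psd_diag_ge0.
Qed.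

Lemma ptrace_setT (A : op R n) x y : ptrace A [set: 'I_n] x y = A x y.
Proof.
rewrite /ptrace (big_pred1 [ffun => false]); last first.
  move=> z; apply/forall_inP/eqP => [z0|-> j _]; last by rewrite ffunE.
  by apply/ffunP => j; rewrite ffunE; apply/negbTE/z0; rewrite inE.
by congr A; apply/ffunP => j; rewrite ffunE inE.
Qed.

Lemma determines_setT (rho : op R n) : is_density rho -> determines rho [set setT].
Proof.
move=> rho_density; split; first by split.
by move=> sigma [_ marg] x y; rewrite -[LHS]ptrace_setT -[RHS]ptrace_setT marg ?inE.
Qed.

End Marginals.

Lemma natr_bin2 (R : numFieldType) N : ('C(N, 2)%:R : R) = N%:R * N.-1%:R / 2.
Proof.
have e : (2 * 'C(N, 2) = N * N.-1)%N.
  by rewrite (mul_bin_left N 1) bin1 mulnC subn1.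
by rewrite -natrM -e natrM [_ * 'C(N, 2)%:R]mulrC mulfK // pnatr_eq0.
Qed.

(* For k = 1, the vector (lam_0 + lam_1/2, 0, lam_1/2, 0, ..., 0) is another solution. *)
Lemma unique_solution_k1 (R : rcfType) n (lam : nat -> R) : (1 < n)%N ->
  (forall l, (l <= 1)%N -> 0 <= lam l) -> unique_solution n 1 lam -> lam 1%N = 0.
Proof.
case: n => [|[|m]] // _ lam0 lam_unique.
pose a l := if l == 0%N then lam 0%N + lam 1%N / 2 else if l == 2%N then lam 1%N / 2 else 0.
have a0 l : (l <= m.+2)%N -> 0 <= a l.
  move=> _; rewrite /a; case: ifP => _; first by rewrite addr_ge0 ?divr_ge0 ?lam0.
  by case: ifP => _ //; rewrite divr_ge0 ?lam0.
have a_solves : solves m.+2 1 lam a.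
  move=> s s1; rewrite !big_ord_recl big_ord0 big1 => [|l _]; last by rewrite /a mul0r.
  rewrite /a /= /coef !binz_shift_bin /shift_bin /bump /=.
  have -> : (m.+2 - 1 = m.+1)%N by lia.
  case: s s1 => [|[|]] // _;
    rewrite /= ?subn0 ?addn0 ?add1n ?bin0 ?bin1 ?mul1n ?muln1 !natr_bin2 /=;
    by field; rewrite ?nat1r -?natrD ?pnatr_eq0.
have := lam_unique a a0 a_solves 2%N (ltac:(by [])); rewrite /a /pad /= => /eqP.
by rewrite mulf_eq0 invr_eq0 pnatr_eq0 orbF => /eqP.
Qed.

Section Determination.
Variables (R : rcfType) (n k : nat) (lam : nat -> R) (sigma : op R n).
Hypothesis sigma_density : is_density sigma.
Hypothesis marg_eq : forall S : {set 'I_n}, #|S| = k ->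
  forall x y, ptrace sigma S x y = ptrace (@dicke_mix R n k lam) S x y.

(* With [lam_1 = 0], rho is the pure state |0...0><0...0|; its marginal on a qubit
   set in [u] vanishes at [u], which forces [sigma u u = 0]. *)
Lemma dicke_mix_k1_determined : k = 1%N -> lam 0%N = 1 -> lam 1%N = 0 ->
  forall x y, sigma x y = @dicke_mix R n k lam x y.
Proof.
move=> k1 lam0 lam1; have x0_weight u : (weight u == 0%N) = (u == [ffun => false]).
  by apply/eqP/eqP => [/weight_eq0 //|->]; apply: weight_false.
have rhoE x y : @dicke_mix R n k lam x y = ((x == [ffun => false]) && (y == [ffun => false]))%:R.
  rewrite dicke_mix_entry k1 -!x0_weight.
  case: (weight x) => [|[|w]]; case: (weight y) => [|[|w']]; rewrite //= ?andbF //.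
    by rewrite bin0 lam0 divr1.
  by rewrite lam1 mul0r.
case: (sigma_density) => herm sigma_psd tr x y; rewrite rhoE.
apply: psd_point_mass => // u u_ne0.
have [p up] : exists p, u p.
  apply/existsP; move: u_ne0; apply: contraR; rewrite negb_exists => /forallP u0.
  by apply/eqP/ffunP => j; rewrite ffunE; apply/negbTE/u0.
apply: (ptrace_diag_eq0 (S := [set p])) => //.
rewrite marg_eq ?cards1 //; apply: big1 => z _; rewrite rhoE.
suff : glue [set p] u z != [ffun => false] by move/negbTE ->.
by apply/eqP => /ffunP /(_ p); rewrite !ffunE inE eqxx up.
Qed.

Lemma dicke_mix_determined : (2 <= k)%N -> (k <= n)%N ->
  unique_solution n k lam -> forall x y, sigma x y = @dicke_mix R n k lam x y.
Proof.
move=> k2 kn lam_unique.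
have sigma_inv := density_weight_invariant k2 kn sigma_density
  (@dicke_mix_weight_invariant R n k lam) marg_eq.
have prefix_marg := marg_eq (card_prefix_set kn).
apply: (eq_of_prefix_marginal kn sigma_inv (@dicke_mix_weight_invariant R n k lam)) => //.
  exact: unique_solution_support kn sigma_density sigma_inv prefix_marg lam_unique.
move=> u v kuv; rewrite dicke_mix_entry ltnS.
case: eqVneq => //= wuv; case: leqP => // uk.
by move: kuv; rewrite -wuv orbb ltnNge uk.
Qed.

End Determination.

Lemma bigminn_leq (T : finType) (P : pred T) (G : T -> nat) d k :
  (\big[minn/d]_(x | P x) G x <= k)%N = (d <= k)%N || [exists x, P x && (G x <= k)%N].
Proof.
rewrite -big_filter.
transitivity ((d <= k)%N || has (fun x => G x <= k)%N [seq x <- index_enum T | P x]).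
  elim: [seq _ <- _ | _] => [|x s IH]; rewrite ?big_nil ?big_cons /= ?orbF //.
  by rewrite geq_min IH orbCA.
congr (_ || _); apply/hasP/existsP => [[x] | [x /andP [Px Gx]]].
  by rewrite mem_filter mem_index_enum andbT => Px Gx; exists x; rewrite Px.
by exists x; rewrite // mem_filter mem_index_enum Px.
Qed.

Lemma unique_solution_Lnum (R : rcfType) n k (lam : nat -> R) : (1 <= k)%N -> (k <= n)%N ->
  (forall l, (l <= k)%N -> 0 <= lam l) -> \sum_(l < k.+1) lam l = 1 ->
  unique_solution n k lam -> (Lnum (@dicke_mix R n k lam) <= k)%N.
Proof.
move=> k1 kn lam0 lam1 lam_unique.
rewrite /Lnum bigminn_leq; have [//|kn'] := leqP n k; apply/existsP.
exists [set S : {set 'I_n} | #|S| == k]; apply/andP; split; last first.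
  by apply/bigmax_leqP => S; rewrite inE => /eqP ->.
apply/asboolP; split; first by split => //; apply: dicke_mix_density.
move=> sigma [sigma_density marg].
have marg_k (S : {set 'I_n}) : #|S| = k ->
    forall x y, ptrace sigma S x y = ptrace (@dicke_mix R n k lam) S x y.
  by move=> Sk; apply: marg; rewrite inE Sk.
have [k_le1|k2] := leqP k 1; last exact: dicke_mix_determined.
have k_eq1 : k = 1%N by lia.
subst k; have lam_1 : lam 1%N = 0 by apply: (unique_solution_k1 kn').
apply: dicke_mix_k1_determined => //.
by move: lam1; rewrite !big_ord_recl big_ord0 /= lam_1 !addr0.
Qed.

Theorem mainTheorem18 (R : realType) (n k : nat) (lam : nat -> R) :
  (1 <= k)%N -> (k <= n)%N ->
  (forall l, (l <= k)%N -> 0 <= lam l) ->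
  \sum_(l < k.+1) lam l = 1 ->
  ((@Lnum R n (@dicke_mix R n k lam) <= k)%N <->
   (forall a : nat -> R,
      (forall l, (l <= n)%N -> 0 <= a l) ->
      (forall s, (s <= k)%N ->
         \sum_(l < n.+1) a l * coef R n k s l = \sum_(l < k.+1) lam l * coef R n k s l) ->
      forall l, (l <= n)%N -> a l = (if (l <= k)%N then lam l else 0))).
Proof.
move=> k1 kn lam0 lam1; split => [L_le a a0 a_solves|]; last exact: unique_solution_Lnum.
have [F F_det Fk] : exists2 F, determines (@dicke_mix R n k lam) F &
                               forall S, S \in F -> (#|S| <= k)%N.
  move: L_le; rewrite /Lnum bigminn_leq => /orP [nk | /existsP [F /andP [/asboolP F_det FL]]].
    exists [set setT]; first exact/determines_setT/dicke_mix_density.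
    by move=> S; rewrite inE => /eqP ->; rewrite cardsT card_ord.
  by exists F => // S SF; apply: leq_trans (leq_bigmax_cond _ SF) FL.
exact: (determines_solution_eq kn lam1 a0 a_solves F_det Fk).
Qed.
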